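(* Let $(X,P,o)$ be a generalized parametric metric space such that $P$ satisfies (P5) and $o$ is continuous. Then $(X,\tau_P)$ is normal: for any two disjoint closed sets $A,B\subseteq X$ there exist disjoint $U,V\in\tau_P$ with $A\subseteq U$ and $B\subseteq V$.
   Context: A binary operation $o:[0,\infty)\times[0,\infty)\to[0,\infty)$ (written $\alpha\, o\, \beta$) is assumed to satisfy, for all $\alpha,\beta,\gamma\in[0,\infty)$: (a) $\alpha\, o\, 0=\alpha$; (b) $\alpha\le\beta\implies \alpha\, o\,\gamma\le\beta\, o\,\gamma$; (c) $\alpha\, o\,\gamma=\gamma\, o\,\alpha$; (d) $\alpha\, o\,(\beta\, o\,\gamma)=(\alpha\, o\,\beta)\, o\,\gamma$. It is continuous if whenever $\alpha_n\to\alpha$ and $\beta_n\to\beta$ in $[0,\infty)$ we have $\alpha_n\, o\,\beta_n\to\alpha\, o\,\beta$. A generalized parametric metric on a nonempty set $X$ is a function $P:X\times X\times(0,\infty)\to[0,\infty)$ such that: (P1) $P(a,b,t)=0$ for all $t>0$ if and only if $a=b$; (P2) $P(a,b,t)=P(b,a,t)$ for all $a,b\in X$, $t>0$; (P3) $P(a,b,s+t)\le P(a,x,s)\, o\, P(b,x,t)$ for all $s,t>0$ and $a,b,x\in X$. The triple $(X,P,o)$ is a generalized parametric metric space. Condition (P5): for all $a,b\in X$, the map $t\mapsto P(a,b,t)$ is continuous on $(0,\infty)$. Open ball: $B(a,\alpha,t)=\{b\in X: P(a,b,t)<\alpha\}$. $\tau_P$ is the topology consisting of all $A\subseteq X$ such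 that for every $a\in A$ there exist $\alpha>0,t>0$ with $B(a,\alpha,t)\subseteq A$. A sequence $\{x_n\}$ converges to $x$ if $\lim_{n\to\infty}P(x_n,x,t)=0$ for all $t>0$. A set $A\subseteq X$ is closed if whenever a sequence in $A$ converges to some $x\in X$, then $x\in A$. *)

From Stdlib Require Import Reals.
Open Scope R_scope.

(* Binary operation o on [0,oo), axioms (a)-(d); values outside [0,oo) are junk. *)
Definition is_gp_op (o : R -> R -> R) : Prop :=
  (forall a b, 0 <= a -> 0 <= b -> 0 <= o a b) /\
  (forall a, 0 <= a -> o a 0 = a) /\
  (forall a b c, 0 <= a -> 0 <= b -> 0 <= c -> a <= b -> o a c <= o b c) /\
  (forall a c, 0 <= a -> 0 <= c -> o a c = o c a) /\
  (forall a b c, 0 <= a -> 0 <= b -> 0 <= c -> o a (o b c) = o (o a b) c).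

Definition op_continuous (o : R -> R -> R) : Prop :=
  forall (an bn : nat -> R) (a b : R),
    (forall n, 0 <= an n) -> (forall n, 0 <= bn n) -> 0 <= a -> 0 <= b ->
    Un_cv an a -> Un_cv bn b -> Un_cv (fun n => o (an n) (bn n)) (o a b).

(* Generalized parametric metric: P : X -> X -> (0,oo) -> [0,oo);
   values at t <= 0 are junk and never used. *)
Definition is_gp_metric {X : Type} (o : R -> R -> R) (P : X -> X -> R -> R) : Prop :=
  (forall a b t, 0 < t -> 0 <= P a b t) /\
  (forall a b, (forall t, 0 < t -> P a b t = 0) <-> a = b) /\
  (forall a b t, 0 < t -> P a b t = P b a t) /\
  (forall a b x s t, 0 < s -> 0 < t -> P a b (s + t) <= o (P a x s) (P b x t)).

Definition P5 {X : Type} (P : X -> X -> R -> R) : Prop :=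
  forall a b t, 0 < t -> continuity_pt (fun s => P a b s) t.

Definition open_ball {X : Type} (P : X -> X -> R -> R) (a : X) (al t : R) : X -> Prop :=
  fun b => P a b t < al.

Definition tauP_open {X : Type} (P : X -> X -> R -> R) (A : X -> Prop) : Prop :=
  forall a, A a -> exists al t, 0 < al /\ 0 < t /\
    (forall b, open_ball P a al t b -> A b).

Definition gp_converges {X : Type} (P : X -> X -> R -> R) (xn : nat -> X) (x : X) : Prop :=
  forall t, 0 < t -> Un_cv (fun n => P (xn n) x t) 0.

(* closed sets, sequential definition as in the paper *)
Definition gp_closed {X : Type} (P : X -> X -> R -> R) (A : X -> Prop) : Prop :=
  forall (xn : nat -> X) (x : X), (forall n, A (xn n)) -> gp_converges P xn x -> A x.

From Stdlib Require Import Reals Lra Lia Classical ClassicalEpsilon.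
Open Scope R_scope.

(* For disjoint closed sets A and B we build
     U = union over a in A of the "half balls" {x | P a x (e_a/2) < d_a},
   and V symmetrically from B, where e_a witnesses the separation of a from
   the closed set B (e_a <= P a b e_a for all b in B) and d_a is a tolerance
   for o at (0,0): u, v < d_a forces o u v < e_a.
   - Every open ball is tau_P-open (left continuity of t |-> P a x t from (P5),
     plus continuity of o at (P a x s, 0)), so U and V, being unions of open
     balls, are open.
   - U contains A and V contains B because P a a t = 0.
   - A point x in both U and V would give, via the triangle inequality (P3)
     and monotonicity of P in t, P a b e <= o (P a x _) (P b x _) < e for the
     larger of the two radii e, contradicting the separation of a from B.
   Continuity of o is used only through an epsilon-delta reformulation,
   obtained from the sequential definition by countable choice. *)

Lemma inv_succ_pos (n : nat) : 0 < / (INR n + 1).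
Proof. apply Rinv_0_lt_compat. pose proof (pos_INR n). lra. Qed.

Lemma inv_succ_small (eps : R) :
  0 < eps -> exists N : nat, forall n, (N <= n)%nat -> / (INR n + 1) < eps.
Proof.
  intros Heps. destruct (archimed_cor1 eps Heps) as [N [HN HN0]].
  exists N. intros n Hn.
  assert (0 < INR N) by (apply lt_0_INR; exact HN0).
  assert (INR N <= INR n) by (apply le_INR; exact Hn).
  apply Rle_lt_trans with (/ INR N); [apply Rinv_le_contravar; lra | exact HN].
Qed.

Lemma Un_cv_of_close (u : nat -> R) (p : R) :
  (forall n, Rabs (u n - p) < / (INR n + 1)) -> Un_cv u p.
Proof.
  intros Hclose eps Heps. destruct (inv_succ_small eps Heps) as [N HN].
  exists N. intros n Hn. unfold R_dist.
  apply Rlt_trans with (/ (INR n + 1)); [apply Hclose | apply HN; lia].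
Qed.

Lemma op_continuous_below (o : R -> R -> R) (Hoc : op_continuous o) (p q c : R) :
  0 <= p -> 0 <= q -> o p q < c ->
  exists d, 0 < d /\ forall u v, 0 <= u -> 0 <= v ->
    Rabs (u - p) < d -> Rabs (v - q) < d -> o u v < c.
Proof.
  intros Hp Hq Hc. apply NNPP. intro Hno.
  assert (Hbad : forall n : nat, exists uv : R * R,
    0 <= fst uv /\ 0 <= snd uv /\ Rabs (fst uv - p) < / (INR n + 1) /\
    Rabs (snd uv - q) < / (INR n + 1) /\ c <= o (fst uv) (snd uv)).
  { intro n. apply NNPP. intro Hn. apply Hno.
    exists (/ (INR n + 1)). split; [apply inv_succ_pos |].
    intros u v Hu Hv Hup Hvq. apply Rnot_le_lt. intro Hcu.
    apply Hn. exists (u, v). simpl. tauto. }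
  destruct (choice _ Hbad) as [f Hf].
  assert (Hcv := Hoc (fun n => fst (f n)) (fun n => snd (f n)) p q
    (fun n => proj1 (Hf n)) (fun n => proj1 (proj2 (Hf n))) Hp Hq
    (Un_cv_of_close _ _ (fun n => proj1 (proj2 (proj2 (Hf n)))))
    (Un_cv_of_close _ _ (fun n => proj1 (proj2 (proj2 (proj2 (Hf n))))))).
  destruct (Hcv (c - o p q)) as [N HN]; [lra |].
  specialize (HN N (Nat.le_refl N)). unfold R_dist in HN. apply Rabs_def2 in HN.
  destruct (Hf N) as [_ [_ [_ [_ Hbig]]]]. lra.
Qed.

Section GeneralizedParametricMetric.
Variables (X : Type) (o : R -> R -> R) (P : X -> X -> R -> R).
Hypotheses (Ho : is_gp_op o) (HP : is_gp_metric o P).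

Lemma op_zero_r (a : R) : 0 <= a -> o a 0 = a.
Proof. destruct Ho as [_ [H _]]. apply H. Qed.

Lemma P_nonneg (a b : X) (t : R) : 0 < t -> 0 <= P a b t.
Proof. destruct HP as [H _]. apply H. Qed.

Lemma P_refl (a : X) (t : R) : 0 < t -> P a a t = 0.
Proof. destruct HP as [_ [H _]]. intros. apply (proj2 (H a a)); auto. Qed.

Lemma P_sym (a b : X) (t : R) : 0 < t -> P a b t = P b a t.
Proof. destruct HP as [_ [_ [H _]]]. apply H. Qed.

Lemma P_tri (a b x : X) (s t : R) :
  0 < s -> 0 < t -> P a b (s + t) <= o (P a x s) (P b x t).
Proof. destruct HP as [_ [_ [_ H]]]. apply H. Qed.

(* P is nonincreasing in the parameter: take x = b in (P3). *)
Lemma P_antitone (a b : X) (s t : R) : 0 < s -> s <= t -> P a b t <= P a b s.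
Proof.
  intros Hs Hst. destruct (Req_dec s t) as [<- | Hne]; [lra |].
  replace t with (s + (t - s)) by ring.
  eapply Rle_trans; [apply (P_tri a b b); lra |].
  rewrite (P_refl b), op_zero_r; [lra | apply P_nonneg; lra | lra].
Qed.

(* o is below any e > 0 on a small square [0,d)^2, since o 0 0 = 0. *)
Definition tolerance (e d : R) : Prop :=
  forall u v, 0 <= u -> 0 <= v -> u < d -> v < d -> o u v < e.

Lemma tolerance_exists (Hoc : op_continuous o) (e : R) :
  0 < e -> exists d, 0 < d /\ tolerance e d.
Proof.
  intros He.
  destruct (op_continuous_below o Hoc 0 0 e (Rle_refl 0) (Rle_refl 0))
    as [d [Hd Hbelow]]; [rewrite op_zero_r; lra |].
  exists d. split; [exact Hd |].
  intros u v Hu Hv Hud Hvd. apply Hbelow; auto; rewrite Rminus_0_r, Rabs_right; lra.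
Qed.

(* A point outside a closed set B is uniformly separated from B: otherwise
   points b_n of B with P a b_n (1/(n+1)) < 1/(n+1) would converge to a. *)
Lemma closed_separation (B : X -> Prop) (a : X) :
  gp_closed P B -> ~ B a -> exists e, 0 < e /\ forall b, B b -> e <= P a b e.
Proof.
  intros HB Ha. apply NNPP. intro Hno.
  assert (Hnear : forall n : nat, exists b, B b /\ P a b (/ (INR n + 1)) < / (INR n + 1)).
  { intro n. apply NNPP. intro Hn. apply Hno.
    exists (/ (INR n + 1)). split; [apply inv_succ_pos |].
    intros b Hb. apply Rnot_lt_le. intro. apply Hn. exists b. auto. }
  destruct (choice _ Hnear) as [f Hf].
  apply Ha, (HB f a); [intro n; apply Hf |].
  intros t Ht eps Heps.
  destruct (inv_succ_small (Rmin t eps)) as [N HN]; [apply Rmin_glb_lt; auto |].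
  exists N. intros n Hn. specialize (HN n ltac:(lia)).
  pose proof (Rmin_l t eps). pose proof (Rmin_r t eps). pose proof (inv_succ_pos n).
  assert (Hmono : P a (f n) t <= P a (f n) (/ (INR n + 1))) by (apply P_antitone; lra).
  pose proof (P_nonneg a (f n) t Ht). destruct (Hf n) as [_ Hsmall].
  unfold R_dist. rewrite Rminus_0_r, P_sym, Rabs_right; lra.
Qed.

Lemma P_bound_left (H5 : P5 P) (a x : X) (t d : R) :
  0 < t -> P a x t < d -> exists s, 0 < s < t /\ P a x s < d.
Proof.
  intros Ht Hd.
  assert (Hc := H5 a x t Ht).
  unfold continuity_pt, continue_in, limit1_in, limit_in in Hc. simpl in Hc.
  destruct (Hc (d - P a x t) ltac:(lra)) as [del [Hdel Hnear]].
  set (s := t - Rmin del t / 2).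
  assert (0 < Rmin del t) by (apply Rmin_glb_lt; lra).
  pose proof (Rmin_l del t). pose proof (Rmin_r del t).
  exists s. split; [unfold s; lra |].
  assert (K : R_dist (P a x s) (P a x t) < d - P a x t).
  { apply Hnear. split; [split; [exact I | unfold s; lra] |].
    unfold R_dist, s. replace (t - Rmin del t / 2 - t) with (- (Rmin del t / 2)) by ring.
    rewrite Rabs_Ropp, Rabs_right; lra. }
  unfold R_dist in K. apply Rabs_def2 in K. lra.
Qed.

Lemma open_ball_open (H5 : P5 P) (Hoc : op_continuous o) (a : X) (d t : R) :
  0 < t -> tauP_open P (open_ball P a d t).
Proof.
  intros Ht x Hx. unfold open_ball in Hx.
  destruct (P_bound_left H5 a x t d Ht Hx) as [s [[Hs Hst] Hxs]].
  destruct (op_continuous_below o Hoc (P a x s) 0 d (P_nonneg a x s Hs) (Rle_refl 0))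
    as [al [Hal Hbelow]]; [rewrite op_zero_r; [lra | apply P_nonneg; lra] |].
  exists al, (t - s). repeat split; [lra | lra |].
  intros y Hy. unfold open_ball in *.
  replace t with (s + (t - s)) by ring.
  eapply Rle_lt_trans; [apply (P_tri a y x); lra |].
  rewrite (P_sym y x); [| lra].
  pose proof (P_nonneg x y (t - s) ltac:(lra)).
  apply Hbelow; [apply P_nonneg; lra | lra | |].
  - rewrite Rminus_diag, Rabs_R0. lra.
  - rewrite Rminus_0_r, Rabs_right; lra.
Qed.

Definition separating_nbhd (A B : X -> Prop) (x : X) : Prop :=
  exists a e d, A a /\ 0 < e /\ 0 < d /\ (forall b, B b -> e <= P a b e) /\
    tolerance e d /\ open_ball P a d (e / 2) x.

Lemma separating_nbhd_open (H5 : P5 P) (Hoc : op_continuous o) (A B : X -> Prop) :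
  tauP_open P (separating_nbhd A B).
Proof.
  intros x [a [e [d [HA [He [Hd [Hsep [Htol Hx]]]]]]]].
  assert (Hball := open_ball_open H5 Hoc a d (e / 2) ltac:(lra)).
  destruct (Hball x Hx) as [al [t [Hal [Ht Hsub]]]].
  exists al, t. repeat split; auto.
  intros y Hy. exists a, e, d. repeat split; auto.
Qed.

Lemma separating_nbhd_contains (Hoc : op_continuous o) (A B : X -> Prop) :
  gp_closed P B -> (forall x, A x -> B x -> False) ->
  forall x, A x -> separating_nbhd A B x.
Proof.
  intros HB Hdisj x Hx.
  destruct (closed_separation B x HB (Hdisj x Hx)) as [e [He Hsep]].
  destruct (tolerance_exists Hoc e He) as [d [Hd Htol]].
  exists x, e, d. repeat split; auto.
  unfold open_ball. rewrite P_refl; lra.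
Qed.

Lemma half_balls_disjoint (a b x : X) (ea eb da db : R) :
  0 < ea -> ea <= eb -> eb <= P b a eb -> tolerance ea da -> tolerance eb db ->
  P a x (ea / 2) < da -> P b x (eb / 2) < db -> False.
Proof.
  intros Hea Hle Hsep Htola Htolb Hxa Hxb.
  assert (Htri := P_tri a b x (ea / 2) (eb / 2) ltac:(lra) ltac:(lra)).
  assert (Hmono : P a b eb <= P a b (ea / 2 + eb / 2)) by (apply P_antitone; lra).
  rewrite P_sym in Hmono; [| lra].
  pose proof (P_nonneg a x (ea / 2) ltac:(lra)).
  pose proof (P_nonneg b x (eb / 2) ltac:(lra)).
  destruct (Rle_dec da db).
  - assert (o (P a x (ea / 2)) (P b x (eb / 2)) < eb) by (apply Htolb; lra). lra.
  - assert (o (P a x (ea / 2)) (P b x (eb / 2)) < ea) by (apply Htola; lra). lra.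
Qed.

Lemma separating_nbhds_disjoint (A B : X -> Prop) (x : X) :
  separating_nbhd A B x -> separating_nbhd B A x -> False.
Proof.
  intros [a [ea [da [Ha [Hea [_ [Hsepa [Htola Hxa]]]]]]]]
         [b [eb [db [Hb [Heb [_ [Hsepb [Htolb Hxb]]]]]]]].
  destruct (Rle_dec ea eb).
  - exact (half_balls_disjoint a b x ea eb da db Hea r (Hsepb a Ha) Htola Htolb Hxa Hxb).
  - exact (half_balls_disjoint b a x eb ea db da Heb ltac:(lra) (Hsepa b Hb)
             Htolb Htola Hxb Hxa).
Qed.

End GeneralizedParametricMetric.

Theorem mainTheorem11 (X : Type) (o : R -> R -> R) (P : X -> X -> R -> R)
  (Ho : is_gp_op o) (HP : is_gp_metric o P) (H5 : P5 P) (Hoc : op_continuous o) :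
  forall A B : X -> Prop,
    gp_closed P A -> gp_closed P B -> (forall x, A x -> B x -> False) ->
    exists U V : X -> Prop,
      tauP_open P U /\ tauP_open P V /\
      (forall x, A x -> U x) /\ (forall x, B x -> V x) /\
      (forall x, U x -> V x -> False).
Proof.
  intros A B HA HB Hdisj.
  exists (separating_nbhd X o P A B), (separating_nbhd X o P B A).
  repeat split.
  - apply separating_nbhd_open; assumption.
  - apply separating_nbhd_open; assumption.
  - apply separating_nbhd_contains; assumption.
  - apply separating_nbhd_contains; try assumption.
    intros x HBx HAx. exact (Hdisj x HAx HBx).
  - intros x HU HV. exact (separating_nbhds_disjoint X o P Ho HP A B x HU HV).
Qed.
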